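(* Let $N\ge1$, $\alpha\in\mathbb{C}$, and $u_0,\ldots,u_N\in\mathbb{C}$ with $u_j\notin\Lambda_\tau$ and $u_j+\alpha\tau\notin\Lambda_\tau$ for all $j$. Put $u=u_0+\cdots+u_N$. Then $$e^{2\pi i\alpha u}q^{\alpha^2(N+1)/2}\,\hat\mu_N(-\alpha\tau-u_0,\ldots,-\alpha\tau-u_N;\alpha+1;\tau)=\frac{(-1)^{N+1}\vartheta(u_0)\cdots\vartheta(u_N)}{\vartheta(u_0+\alpha\tau)\cdots\vartheta(u_N+\alpha\tau)}\,\hat\mu_N(u_0,\ldots,u_N;\alpha+1;\tau),$$ where $q^{\alpha^2(N+1)/2}:=e^{\pi i\alpha^2(N+1)\tau}$.
   Context: Fix $\tau$ with $\operatorname{Im}\tau>0$, $q=e^{2\pi i\tau}$, $\Lambda_\tau=\mathbb{Z}+\tau\mathbb{Z}$, $q^\beta:=e^{2\pi i\beta\tau}$. $(x;q)_\infty=\prod_{j\ge0}(1-xq^j)$. $\vartheta(u)=\vartheta(u;\tau)=-ie^{-\pi iu}q^{1/8}(q;q)_\infty(e^{2\pi iu};q)_\infty(qe^{-2\pi iu};q)_\infty$. For $n\in\mathbb{Z}^N$, $|n|=n_1+\cdots+n_N$. The multivariable generalized $\mu$-function is $$\hat\mu_N(u_0,\ldots,u_N;\beta;\tau)=e^{\pi i(\beta-1)u}\sum_{n\in\mathbb{Z}^N}\frac{e^{\pi iu_0}\,(e^{2\pi iu_0}q^{\beta+|n|};q)_\infty}{(e^{2\pi iu_0}q^{|n|};q)_\infty}\prod_{j=1}^N\frac{(-1)^{n_j}e^{-2\pi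 in_ju_j}q^{n_j(n_j+1)/2}}{\vartheta(u_j;\tau)},\quad u=u_0+\cdots+u_N,$$ defined for $u_0,\ldots,u_N\notin\Lambda_\tau$. *)

From Stdlib Require Import Reals ZArith List ClassicalEpsilon.
From Coquelicot Require Import Coquelicot.
Open Scope C_scope.

Definition cexp (z : C) : C :=
  (exp (Re z) * cos (Im z), exp (Re z) * sin (Im z))%R.

(* limit of a complex sequence (the unique limit if it exists, 0 otherwise) *)
Definition climit (s : nat -> C) : C :=
  match excluded_middle_informative
          (exists l : C, filterlim s eventually (locally l)) with
  | left H => proj1_sig (constructive_indefinite_description _ H)
  | right _ => 0
  end.

Fixpoint cprod (n : nat) (f : nat -> C) : C :=
  match n with
  | O => 1
  | S m => cprod m f * f m
  end.

Fixpoint csum (n : nat) (f : nat -> C) : C :=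
  match n with
  | O => 0
  | S m => csum m f + f m
  end.

Definition qpow (tau beta : C) : C := cexp (2 * PI * Ci * beta * tau).

(* (x; q)_oo with q = e^{2 pi i tau}, as the limit of partial products *)
Definition qpoch (x tau : C) : C :=
  climit (fun n => cprod n (fun j => 1 - x * qpow tau (INR j))).

Definition vartheta (u tau : C) : C :=
  - Ci * cexp (- PI * Ci * u) * qpow tau (/ 8)
  * qpoch (qpow tau 1) tau
  * qpoch (cexp (2 * PI * Ci * u)) tau
  * qpoch (qpow tau 1 * cexp (- (2 * PI * Ci * u))) tau.

Definition in_lattice (z tau : C) : Prop :=
  exists m n : Z, z = RtoC (IZR m) + RtoC (IZR n) * tau.

(* sum of f over the box [-K, K]^N; elements of Z^N are lists of length N *)
Fixpoint zsum (a : Z) (len : nat) (g : Z -> C) : C :=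
  match len with
  | O => 0
  | S m => zsum a m g + g (a + Z.of_nat m)%Z
  end.

Fixpoint boxsum (N : nat) (K : nat) (f : list Z -> C) : C :=
  match N with
  | O => f nil
  | S M => zsum (- Z.of_nat K)%Z (2 * K + 1)
                (fun k => boxsum M K (fun l => f (k :: l)))
  end.

Definition sumZN (N : nat) (f : list Z -> C) : C :=
  climit (fun K => boxsum N K f).

Definition zabs_sum (n : list Z) : Z := fold_right Z.add 0%Z n.

Definition sgnZ (k : Z) : C := if Z.even k then 1 else -1.

(* multivariable generalized mu-function mu_hat_N(u_0,...,u_N; beta; tau);
   the variables u_0, ..., u_N are u 0, ..., u N; the summation index
   n = (n_1,...,n_N) is a list of length N, n_j = nth (j-1) n 0. *)
Definition mu_hat (N : nat) (u : nat -> C) (beta tau : C) : C :=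
  let U := csum (S N) u in
  cexp (PI * Ci * (beta - 1) * U) *
  sumZN N (fun n =>
    let m := RtoC (IZR (zabs_sum n)) in
    cexp (PI * Ci * u 0%nat)
    * qpoch (cexp (2 * PI * Ci * u 0%nat) * qpow tau (beta + m)) tau
    / qpoch (cexp (2 * PI * Ci * u 0%nat) * qpow tau m) tau
    * cprod N (fun j =>
        let nj := nth j n 0%Z in
        sgnZ nj
        * cexp (- (2 * PI * Ci * RtoC (IZR nj) * u (S j)))
        * cexp (PI * Ci * tau * RtoC (IZR (nj * (nj + 1))))
        / vartheta (u (S j)) tau)).

(* Replacing u_j by -alpha tau - u_j is undone by the reflection n -> -n of the
   summation index, term by term.  For j >= 1 the factor picks up
   e^{2 pi i (alpha+1) tau n_j} and, theta being odd, the ratio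
   -theta(u_j)/theta(u_j + alpha tau).  In the head factor the ratio of infinite
   products is rewritten through the quasi-periodicity
   theta(v + tau) = -e^{-pi i tau - 2 pi i v} theta(v); shifting by |n| periods gives
   the same theta ratio for j = 0 and absorbs e^{2 pi i (alpha+1) tau |n|}.  The
   remaining exponentials combine to e^{pi i alpha U}.  Dividing is legitimate since
   (x; q)_oo vanishes only if some factor does: a tail of the product stays within
   1/3 of 1. *)

From Stdlib Require Import Reals ZArith List Lra Lia Classical ClassicalEpsilon FunctionalExtensionality.
From Coquelicot Require Import Coquelicot.
Open Scope C_scope.

Lemma cexp_add (a b : C) : cexp (a + b) = cexp a * cexp b.
Proof.
  destruct a as [a1 a2], b as [b1 b2]. unfold cexp, Cmult, Cplus; simpl.
  rewrite exp_plus, cos_plus, sin_plus. f_equal; ring.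
Qed.

Lemma cexp_0 : cexp 0 = 1.
Proof. unfold cexp; simpl. rewrite exp_0, cos_0, sin_0. apply injective_projections; simpl; ring. Qed.

Lemma cexp_neq0 (z : C) : cexp z <> 0.
Proof.
  destruct z as [a b]. unfold cexp; simpl. intros [= H1 H2].
  pose proof (exp_pos a). pose proof (sin2_cos2 b). unfold Rsqr in *.
  apply Rmult_integral in H1 as [H1 | H1]; [lra|].
  apply Rmult_integral in H2 as [H2 | H2]; [lra|]. nra.
Qed.

Lemma cexp_opp_mul (z : C) : cexp (- z) * cexp z = 1.
Proof. rewrite <- cexp_add, <- cexp_0. f_equal. ring. Qed.

Lemma cexp_opp (z : C) : cexp (- z) = / cexp z.
Proof.
  rewrite <- (Cmult_1_r (cexp (- z))), <- (Cinv_r (cexp z)) by apply cexp_neq0.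
  rewrite Cmult_assoc, cexp_opp_mul. ring.
Qed.

Lemma Cmod_cexp (z : C) : Cmod (cexp z) = exp (Re z).
Proof.
  destruct z as [a b]. unfold cexp, Cmod; simpl.
  replace ((exp a * cos b) * ((exp a * cos b) * 1) + (exp a * sin b) * ((exp a * sin b) * 1))%R
    with (exp a * exp a)%R.
  - apply sqrt_square. left; apply exp_pos.
  - pose proof (sin2_cos2 b). unfold Rsqr in H. nra.
Qed.

Definition e2pi (w : C) : C := cexp (2 * PI * Ci * w).

Lemma e2pi_add (a b : C) : e2pi (a + b) = e2pi a * e2pi b.
Proof. unfold e2pi. rewrite <- cexp_add. f_equal. ring. Qed.

Lemma e2pi_opp_mul (w : C) : e2pi (- w) * e2pi w = 1.
Proof. unfold e2pi. rewrite <- cexp_add, <- cexp_0. f_equal. ring. Qed.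

Lemma one_sub_e2pi (w : C) : 1 - e2pi w = - e2pi w * (1 - e2pi (- w)).
Proof.
  transitivity (1 - e2pi w + (e2pi (- w) * e2pi w - 1)); [rewrite e2pi_opp_mul|]; ring.
Qed.

Lemma qpow_e2pi (tau b : C) : qpow tau b = e2pi (b * tau).
Proof. unfold qpow, e2pi. f_equal. ring. Qed.

Lemma e2pi_eq_1 (w : C) : e2pi w = 1 -> exists k : Z, w = IZR k.
Proof.
  destruct w as [a b]. unfold e2pi, cexp.
  replace (Re (2 * PI * Ci * (a, b))) with (- (2 * PI * b))%R by (simpl; ring).
  replace (Im (2 * PI * Ci * (a, b))) with (2 * (PI * a))%R by (simpl; ring).
  intros [= H1 H2].
  pose proof (exp_pos (- (2 * PI * b))) as He. pose proof PI_RGT_0.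
  pose proof (sin2_cos2 (2 * (PI * a))). unfold Rsqr in *.
  assert (Hs : sin (2 * (PI * a)) = 0%R) by (apply Rmult_integral in H2 as [|]; lra).
  (* [exp(-2 pi b) cos(2 pi a) = 1] with [cos(2 pi a) = +-1] forces [cos(2 pi a) = 1] and [b = 0] *)
  assert (Hc : cos (2 * (PI * a)) = 1%R).
  { destruct (Rlt_or_le 0 (cos (2 * (PI * a)))); nra. }
  assert (Hb : b = 0%R).
  { rewrite Hc, Rmult_1_r, <- exp_0 in H1. apply exp_inv in H1. nra. }
  rewrite cos_2a_sin in Hc.
  destruct (sin_eq_0_0 (PI * a)) as [k Hk]; [nra|].
  exists k. apply injective_projections; simpl; [|auto].
  apply (Rmult_eq_reg_l PI); lra.
Qed.

Definition is_climit (s : nat -> C) (l : C) : Prop :=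
  filterlim s eventually (locally l).

Lemma climit_unique (s : nat -> C) (l : C) : is_climit s l -> climit s = l.
Proof.
  intros H. unfold climit.
  destruct (excluded_middle_informative _) as [E | E].
  - destruct (constructive_indefinite_description _ E) as [l' Hl']. simpl.
    exact (@filterlim_locally_unique _ _ C_NormedModule eventually _ s l' l Hl' H).
  - exfalso; apply E; exists l; auto.
Qed.

Lemma climit_default (s : nat -> C) : (forall l, ~ is_climit s l) -> climit s = 0.
Proof.
  intros H. unfold climit.
  destruct (excluded_middle_informative _) as [[l Hl] | _]; [|auto].
  exfalso; eapply H; eauto.
Qed.

Lemma climit_ext (s t : nat -> C) : (forall n, s n = t n) -> climit s = climit t.
Proof. intros H. f_equal. apply functional_extensionality, H. Qed.

Lemma is_climit_ext (s t : nat -> C) (l : C) :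
  (forall n, s n = t n) -> is_climit s l -> is_climit t l.
Proof. intros H. apply filterlim_ext, H. Qed.

Lemma is_climit_S (s : nat -> C) (l : C) :
  is_climit s l <-> is_climit (fun n => s (S n)) l.
Proof.
  unfold is_climit, filterlim, filter_le, filtermap.
  split; intros H P HP; destruct (H P HP) as [N HN].
  - exists N. intros n Hn. apply HN. lia.
  - exists (S N). intros [|n] Hn; [lia|]. apply HN. lia.
Qed.

Lemma climit_S (s : nat -> C) : climit (fun n => s (S n)) = climit s.
Proof.
  destruct (classic (exists l, is_climit s l)) as [[l Hl] | E].
  - rewrite (climit_unique s l Hl). apply climit_unique, (is_climit_S s l), Hl.
  - rewrite !climit_default; auto.
    + intros l Hl. apply E. exists l. exact Hl.
    + intros l Hl. apply E. exists l. apply (is_climit_S s l), Hl.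
Qed.

Lemma is_climit_scal (c : C) (s : nat -> C) (l : C) :
  is_climit s l -> is_climit (fun n => c * s n) (c * l).
Proof.
  intros H. apply (filterlim_comp _ _ _ s (fun z : C => scal c z) _ _ _ H).
  apply (filterlim_scal_r (V := C_NormedModule)).
Qed.

Lemma climit_scal (c : C) (s : nat -> C) : climit (fun n => c * s n) = c * climit s.
Proof.
  destruct (classic (c = 0)) as [-> | Hc].
  - rewrite Cmult_0_l. apply climit_unique.
    apply (is_climit_ext (fun _ => 0)); [intros; ring|]. apply filterlim_const.
  - destruct (classic (exists l, is_climit s l)) as [[l Hl] | E].
    + rewrite (climit_unique s l Hl). apply climit_unique, is_climit_scal, Hl.
    + rewrite !climit_default; [ring| |].
      * intros l Hl. apply E. exists l. exact Hl.
      * intros l Hl. apply E. exists (/ c * l).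
        refine (is_climit_ext _ _ _ _ (is_climit_scal (/ c) _ _ Hl)).
        intros n. field. exact Hc.
Qed.

Lemma is_climit_closed_ball (s : nat -> C) (l c : C) (M : R) :
  is_climit s l -> (forall n, (Cmod (s n - c) <= M)%R) -> (Cmod (l - c) <= M)%R.
Proof.
  intros H HM. destruct (Rle_or_lt (Cmod (l - c)) M) as [|Hlt]; [auto|]. exfalso.
  assert (Heps : (0 < Cmod (l - c) - M)%R) by lra.
  destruct (proj1 (filterlim_locally_ball_norm (F := eventually) (U := C_NormedModule) s l) H
              (mkposreal _ Heps)) as [N HN].
  specialize (HN N (le_n N)). unfold ball_norm in HN. simpl in HN.
  change (norm (minus (s N) l)) with (Cmod (s N - l)) in HN.
  pose proof (Cmod_triangle (s N - c) (l - s N)) as Htri.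
  replace (s N - c + (l - s N)) with (l - c) in Htri by ring.
  replace (l - s N) with (- (s N - l)) in Htri by ring. rewrite Cmod_opp in Htri.
  specialize (HM N). lra.
Qed.

Lemma is_climit_geometric_increments (s : nat -> C) (A r : R) :
  (0 <= r < 1)%R -> (forall n, (Cmod (s (S n) - s n) <= A * r ^ n)%R) ->
  exists l, is_climit s l.
Proof.
  intros Hr Hs.
  set (d := fun n => s (S n) - s n).
  assert (Hd : ex_series (V := C_CompleteNormedModule) d).
  { apply (ex_series_le (V := C_CompleteNormedModule) d (fun n => A * r ^ n)%R); [exact Hs|].
    apply (ex_series_scal_l (V := R_NormedModule) A (fun n => r ^ n)%R).
    apply ex_series_geom. rewrite Rabs_pos_eq; lra. }
  destruct Hd as [l Hl].
  assert (Hsum : forall n, sum_n d n = s (S n) - s O).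
  { induction n as [|n IH].
    - rewrite sum_O. reflexivity.
    - rewrite sum_Sn, IH. change (s (S n) - s O + d (S n) = s (S (S n)) - s O).
      unfold d. ring. }
  exists (s O + l). apply is_climit_S.
  refine (is_climit_ext (fun n => plus (s O) (sum_n d n)) _ _ _ _).
  { intros n. rewrite Hsum. change (s O + (s (S n) - s O) = s (S n)). ring. }
  apply (filterlim_comp_2 (G := locally (s O)) (H := locally l) (fun _ => s O) (sum_n d) plus).
  - apply filterlim_const.
  - exact Hl.
  - apply (filterlim_plus (V := C_NormedModule)).
Qed.

Lemma cprod_ext (n : nat) (f g : nat -> C) :
  (forall j, (j < n)%nat -> f j = g j) -> cprod n f = cprod n g.
Proof.
  induction n as [|n IH]; intros H; simpl; [reflexivity|].
  f_equal; [apply IH; intros j Hj|]; apply H; lia.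
Qed.

Lemma cprod_succ_l (n : nat) (f : nat -> C) :
  cprod (S n) f = f O * cprod n (fun j => f (S j)).
Proof.
  induction n as [|n IH]; [simpl; ring|].
  change (cprod (S (S n)) f) with (cprod (S n) f * f (S n)). rewrite IH. simpl. ring.
Qed.

Lemma cprod_mult (n : nat) (f g : nat -> C) :
  cprod n (fun j => f j * g j) = cprod n f * cprod n g.
Proof. induction n as [|n IH]; simpl; [ring|]. rewrite IH. ring. Qed.

Lemma cprod_neq0 (n : nat) (f : nat -> C) :
  (forall j, (j < n)%nat -> f j <> 0) -> cprod n f <> 0.
Proof.
  induction n as [|n IH]; intros H; simpl.
  - intros [= E]. lra.
  - apply Cmult_neq_0; [apply IH; intros|]; apply H; lia.
Qed.

Lemma cprod_opp_div (n : nat) (f g : nat -> C) :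
  (forall j, (j < n)%nat -> g j <> 0) ->
  cprod n (fun j => - f j / g j) = (-1) ^ n * cprod n f / cprod n g.
Proof.
  induction n as [|n IH]; intros H; simpl.
  - field.
  - rewrite IH by (intros; apply H; lia).
    field. split; [apply H; lia | apply cprod_neq0; intros; apply H; lia].
Qed.

Lemma qpow_nat (tau : C) (j : nat) : qpow tau (INR j) = qpow tau 1 ^ j.
Proof.
  induction j as [|j IH].
  - unfold qpow. simpl. rewrite <- cexp_0. f_equal. ring.
  - rewrite S_INR, RtoC_plus, !qpow_e2pi in *. simpl.
    rewrite <- IH, <- e2pi_add. f_equal. ring.
Qed.

Lemma qpoch_succ (z tau : C) : qpoch z tau = (1 - z) * qpoch (z * qpow tau 1) tau.
Proof.
  unfold qpoch. rewrite <- climit_S, <- climit_scal.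
  apply climit_ext. intros n. rewrite cprod_succ_l. f_equal.
  - rewrite qpow_nat. ring.
  - apply cprod_ext. intros j _. rewrite !qpow_nat. simpl. ring.
Qed.

Lemma qpoch_split (J : nat) (z tau : C) :
  qpoch z tau = cprod J (fun j => 1 - z * qpow tau 1 ^ j) * qpoch (z * qpow tau 1 ^ J) tau.
Proof.
  induction J as [|J IH].
  - simpl. rewrite Cmult_1_r. ring.
  - rewrite IH, (qpoch_succ (z * qpow tau 1 ^ J)). simpl.
    replace (z * qpow tau 1 ^ J * qpow tau 1) with (z * (qpow tau 1 * qpow tau 1 ^ J)) by ring.
    ring.
Qed.

Lemma Cmod_qpow_lt_1 (tau : C) : (0 < Im tau)%R -> (Cmod (qpow tau 1) < 1)%R.
Proof.
  intros H. unfold qpow. rewrite Cmod_cexp.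
  assert (Hre : (Re (2 * PI * Ci * 1 * tau) < 0)%R).
  { destruct tau as [a b]. simpl in *. pose proof PI_RGT_0. nra. }
  pose proof (exp_increasing _ _ Hre) as He. rewrite exp_0 in He. exact He.
Qed.

Section SmallQProduct.

Variables w q : C.
Hypothesis Hq : (Cmod q < 1)%R.
Hypothesis Hw : (4 * Cmod w <= 1 - Cmod q)%R.

Let p (n : nat) : C := cprod n (fun j => 1 - w * q ^ j).

Lemma qprod_increment (n : nat) : p (S n) - p n = - (p n * (w * q ^ n)).
Proof. unfold p. simpl. ring. Qed.

Lemma qprod_near_1 (n : nat) : (Cmod (p n - 1) <= 1 / 3)%R.
Proof.
  set (r := Cmod q) in *. set (a := Cmod w) in *.
  assert (Hr : (0 <= r)%R) by apply Cmod_ge_0.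
  assert (Ha : (0 <= a)%R) by apply Cmod_ge_0.
  (* the sharper invariant [|p n - 1| <= 4/3 a (1 - r^n) / (1 - r)] survives the induction *)
  enough (Hinv : (Cmod (p n - 1) * (1 - r) <= 4 / 3 * a * (1 - r ^ n))%R).
  { pose proof (pow_le r n Hr). apply (Rmult_le_reg_r (1 - r)); [lra | nra]. }
  induction n as [|n IH].
  - replace (p O - 1) with (RtoC 0) by (unfold p; simpl; ring). rewrite Cmod_0. simpl. lra.
  - replace (p (S n) - 1) with ((p n - 1) + (p (S n) - p n)) by ring.
    rewrite qprod_increment.
    pose proof (Cmod_triangle (p n - 1) (- (p n * (w * q ^ n)))) as Htri.
    rewrite Cmod_opp, !Cmod_mult, Cmod_pow in Htri. fold r a in Htri.
    pose proof (Cmod_triangle (p n - 1) 1) as Hp.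
    replace (p n - 1 + 1) with (p n) in Hp by ring. rewrite Cmod_1 in Hp.
    assert (Hrn : (0 <= r ^ n <= 1)%R) by (split; [apply pow_le | rewrite <- (pow1 n); apply pow_incr]; lra).
    assert (Hp' : (Cmod (p n) <= 4 / 3)%R) by nra.
    assert (Hstep : (Cmod (p n) * (a * r ^ n) <= 4 / 3 * (a * r ^ n))%R)
      by (apply Rmult_le_compat_r; nra).
    apply (Rle_trans _ ((Cmod (p n - 1) + 4 / 3 * (a * r ^ n)) * (1 - r))).
    + apply Rmult_le_compat_r; lra.
    + simpl. nra.
Qed.

Lemma climit_qprod_neq0 : climit p <> 0.
Proof.
  set (r := Cmod q) in *. set (a := Cmod w) in *.
  assert (Hr : (0 <= r)%R) by apply Cmod_ge_0.
  assert (Ha : (0 <= a)%R) by apply Cmod_ge_0.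
  destruct (is_climit_geometric_increments p (4 / 3 * a) r) as [l Hl].
  { lra. }
  { intros n. rewrite qprod_increment, Cmod_opp, !Cmod_mult, Cmod_pow. fold r a.
    pose proof (Cmod_triangle (p n - 1) 1) as Hp.
    replace (p n - 1 + 1) with (p n) in Hp by ring. rewrite Cmod_1 in Hp.
    pose proof (qprod_near_1 n). pose proof (pow_le r n Hr).
    assert (0 <= a * r ^ n)%R by nra. nra. }
  rewrite (climit_unique p l Hl). intros ->.
  pose proof (is_climit_closed_ball p 0 1 (1 / 3) Hl qprod_near_1) as H.
  replace (0 - 1) with (- (1)) in H by ring. rewrite Cmod_opp, Cmod_1 in H. lra.
Qed.

End SmallQProduct.

Lemma qpoch_neq0 (z tau : C) : (0 < Im tau)%R ->
  (forall k : nat, 1 - z * qpow tau 1 ^ k <> 0) -> qpoch z tau <> 0.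
Proof.
  intros Htau Hk.
  set (q := qpow tau 1). set (r := Cmod q). set (m := Cmod z).
  assert (Hq : (r < 1)%R) by apply Cmod_qpow_lt_1, Htau.
  assert (Hr : (0 <= r)%R) by apply Cmod_ge_0.
  assert (Hm : (0 <= m)%R) by apply Cmod_ge_0.
  (* split off finitely many factors so that the tail starts with a small [z q^J] *)
  destruct (pow_lt_1_zero r ltac:(rewrite Rabs_pos_eq; lra) ((1 - r) / (4 * (m + 1))))
    as [J HJ].
  { apply Rdiv_lt_0_compat; lra. }
  specialize (HJ J (le_n J)). rewrite Rabs_pos_eq in HJ by (apply pow_le; auto).
  rewrite (qpoch_split J). apply Cmult_neq_0.
  - apply cprod_neq0. intros j _. apply Hk.
  - unfold qpoch.
    rewrite (climit_ext _ (fun n => cprod n (fun j => 1 - z * q ^ J * q ^ j))).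
    + apply climit_qprod_neq0; [exact Hq|].
      rewrite Cmod_mult, Cmod_pow. fold r m.
      assert (r ^ J * (4 * (m + 1)) < 1 - r)%R.
      { apply (Rmult_lt_compat_r (4 * (m + 1))) in HJ; [|lra].
        unfold Rdiv in HJ. rewrite Rmult_assoc, Rinv_l in HJ by lra. lra. }
      pose proof (pow_le r J Hr). nra.
    + intros n. apply cprod_ext. intros j _. rewrite qpow_nat. reflexivity.
Qed.

Definition poch (tau w : C) : C := qpoch (e2pi w) tau.

Lemma poch_succ (tau w : C) : poch tau w = (1 - e2pi w) * poch tau (w + tau).
Proof.
  unfold poch. rewrite qpoch_succ, qpow_e2pi, <- e2pi_add.
  do 3 f_equal. ring.
Qed.

Lemma not_in_lattice_opp (s tau : C) : ~ in_lattice s tau -> ~ in_lattice (- s) tau.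
Proof.
  intros Hs [m [n E]]. apply Hs. exists (- m)%Z, (- n)%Z.
  rewrite !opp_IZR, !RtoC_opp.
  transitivity (- - s); [ring|]. rewrite E. ring.
Qed.

Lemma not_in_lattice_add (s tau : C) (k : Z) :
  ~ in_lattice s tau -> ~ in_lattice (s + IZR k * tau) tau.
Proof.
  intros Hs [m [n E]]. apply Hs. exists m, (n - k)%Z.
  rewrite minus_IZR, RtoC_minus.
  transitivity (s + IZR k * tau - IZR k * tau); [ring|]. rewrite E. ring.
Qed.

Lemma poch_neq0 (tau w : C) : (0 < Im tau)%R -> ~ in_lattice w tau -> poch tau w <> 0.
Proof.
  intros Htau Hw. apply qpoch_neq0; [exact Htau|]. intros j E.
  rewrite <- qpow_nat, qpow_e2pi, <- e2pi_add in E.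
  destruct (e2pi_eq_1 (w + INR j * tau)) as [n Hn].
  { transitivity (1 - (1 - e2pi (w + INR j * tau))); [ring|]. rewrite E. ring. }
  apply (not_in_lattice_add w tau (Z.of_nat j)) in Hw. apply Hw.
  exists n, 0%Z. rewrite <- INR_IZR_INZ, Hn. ring.
Qed.

Definition theta_core (tau v : C) : C := poch tau v * poch tau (tau - v).

Definition theta_const (tau : C) : C := - Ci * qpow tau (/ 8) * qpoch (qpow tau 1) tau.

Lemma vartheta_core (v tau : C) :
  vartheta v tau = theta_const tau * cexp (- PI * Ci * v) * theta_core tau v.
Proof.
  unfold vartheta, theta_const, theta_core, poch.
  replace (qpow tau 1 * cexp (- (2 * PI * Ci * v))) with (e2pi (tau - v)).
  - unfold e2pi. ring.
  - rewrite qpow_e2pi. unfold e2pi. rewrite <- cexp_add. f_equal. ring.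
Qed.

Lemma theta_core_pred (tau w : C) :
  theta_core tau w = - e2pi w * theta_core tau (w + tau).
Proof.
  unfold theta_core. replace (tau - (w + tau)) with (- w) by ring.
  rewrite (poch_succ tau w), (poch_succ tau (- w)), (one_sub_e2pi w).
  replace (- w + tau) with (tau - w) by ring.
  ring.
Qed.

Lemma theta_core_opp (tau v : C) :
  theta_core tau v = - e2pi v * theta_core tau (- v).
Proof.
  unfold theta_core. replace (tau - - v) with (v + tau) by ring.
  rewrite (poch_succ tau v), (poch_succ tau (- v)), (one_sub_e2pi v).
  replace (- v + tau) with (tau - v) by ring.
  ring.
Qed.

Lemma vartheta_opp (v tau : C) : vartheta (- v) tau = - vartheta v tau.
Proof.
  rewrite !vartheta_core, (theta_core_opp tau v).
  replace (cexp (- PI * Ci * - v)) with (cexp (- PI * Ci * v) * e2pi v).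
  - ring.
  - unfold e2pi. rewrite <- cexp_add. f_equal. ring.
Qed.

Lemma theta_const_neq0 (tau : C) : (0 < Im tau)%R -> theta_const tau <> 0.
Proof.
  intros Htau. unfold theta_const. repeat apply Cmult_neq_0.
  - intros [= E]. lra.
  - apply cexp_neq0.
  - (* [(q; q)_oo] is [poch tau tau], but [tau] lies in the lattice: argue directly *)
    apply qpoch_neq0; [exact Htau|]. intros j.
    replace (qpow tau 1 * qpow tau 1 ^ j) with (qpow tau 1 ^ S j) by (simpl; ring).
    rewrite <- qpow_nat, qpow_e2pi. intros E.
    destruct (e2pi_eq_1 (INR (S j) * tau)) as [n Hn].
    { transitivity (1 - (1 - e2pi (INR (S j) * tau))); [ring|]. rewrite E. ring. }
    apply (f_equal Im) in Hn. rewrite im_scal_l in Hn.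
    change (Im (RtoC (IZR n))) with 0%R in Hn.
    pose proof (lt_0_INR (S j) ltac:(lia)). nra.
Qed.

Lemma theta_core_neq0 (tau v : C) : (0 < Im tau)%R -> ~ in_lattice v tau -> theta_core tau v <> 0.
Proof.
  intros Htau Hv. apply Cmult_neq_0; apply poch_neq0; auto.
  replace (tau - v) with (- v + IZR 1 * tau) by (simpl; ring).
  apply not_in_lattice_add, not_in_lattice_opp, Hv.
Qed.

Lemma vartheta_neq0 (v tau : C) : (0 < Im tau)%R -> ~ in_lattice v tau -> vartheta v tau <> 0.
Proof.
  intros Htau Hv. rewrite vartheta_core. apply Cmult_neq_0; [apply Cmult_neq_0|].
  - apply theta_const_neq0, Htau.
  - apply cexp_neq0.
  - apply theta_core_neq0; assumption.
Qed.

Lemma IZR_recurrence_unique (f g c : C -> C) :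
  (forall x, c x <> 0) ->
  (forall x, f (x + 1) = c x * f x) -> (forall x, g (x + 1) = c x * g x) ->
  f 0 = g 0 -> forall m : Z, f (IZR m) = g (IZR m).
Proof.
  intros Hc Hf Hg H0. apply Z.peano_ind.
  - exact H0.
  - intros m IH. rewrite succ_IZR, RtoC_plus, Hf, Hg, IH. reflexivity.
  - intros m IH. rewrite <- (Z.succ_pred m), succ_IZR, RtoC_plus, Hf, Hg in IH.
    set (x := RtoC (IZR (Z.pred m))) in *.
    transitivity (/ c x * (c x * f x)); [field; apply Hc|].
    rewrite IH. field. apply Hc.
Qed.

(* Both sides are multiplied by [- e2pi (s + (a - M) tau)] when [M] increases by one:
   this is the quasi-periodicity of theta. *)
Lemma theta_core_twist (tau s a : C) (m : Z) :
  e2pi (- (s + a * tau) + (a + 1) * tau * IZR m)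
  * theta_core tau (s - IZR m * tau) * theta_core tau (s + a * tau)
  = - theta_core tau s * theta_core tau (s + (a + 1 - IZR m) * tau).
Proof.
  apply (IZR_recurrence_unique
    (fun M => e2pi (- (s + a * tau) + (a + 1) * tau * M)
              * theta_core tau (s - M * tau) * theta_core tau (s + a * tau))
    (fun M => - theta_core tau s * theta_core tau (s + (a + 1 - M) * tau))
    (fun M => - e2pi (s + (a - M) * tau))); intros; cbv beta.
  - intros E. apply (cexp_neq0 (2 * PI * Ci * (s + (a - x) * tau))).
    transitivity (- - e2pi (s + (a - x) * tau)); [unfold e2pi; ring|]. rewrite E. ring.
  - rewrite (theta_core_pred tau (s - (x + 1) * tau)).
    replace (s - (x + 1) * tau + tau) with (s - x * tau) by ring.
    replace (- (s + a * tau) + (a + 1) * tau * (x + 1))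
      with ((- (s + a * tau) + (a + 1) * tau * x) + (a + 1) * tau) by ring.
    replace (s + (a - x) * tau) with ((a + 1) * tau + (s - (x + 1) * tau)) by ring.
    rewrite !e2pi_add. ring.
  - replace (s + (a + 1 - (x + 1)) * tau) with (s + (a - x) * tau) by ring.
    rewrite (theta_core_pred tau (s + (a - x) * tau)).
    replace (s + (a - x) * tau + tau) with (s + (a + 1 - x) * tau) by ring.
    ring.
  - replace (- (s + a * tau) + (a + 1) * tau * 0) with (- (s + a * tau)) by ring.
    replace (s - 0 * tau) with s by ring.
    replace (s + (a + 1 - 0) * tau) with (s + a * tau + tau) by ring.
    rewrite (theta_core_pred tau (s + a * tau)).
    transitivity (- (e2pi (- (s + a * tau)) * e2pi (s + a * tau))
                  * theta_core tau s * theta_core tau (s + a * tau + tau)); [ring|].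
    rewrite e2pi_opp_mul. ring.
Qed.

Definition mu_head (u : nat -> C) (beta tau M : C) : C :=
  cexp (PI * Ci * u O)
  * qpoch (cexp (2 * PI * Ci * u O) * qpow tau (beta + M)) tau
  / qpoch (cexp (2 * PI * Ci * u O) * qpow tau M) tau.

Definition mu_factor (u : nat -> C) (tau : C) (k : Z) (j : nat) : C :=
  sgnZ k
  * cexp (- (2 * PI * Ci * IZR k * u (S j)))
  * cexp (PI * Ci * tau * IZR (k * (k + 1)))
  / vartheta (u (S j)) tau.

Definition mu_summand (u : nat -> C) (beta tau : C) (N : nat) (n : list Z) : C :=
  mu_head u beta tau (IZR (zabs_sum n)) * cprod N (fun j => mu_factor u tau (nth j n 0%Z) j).

Lemma mu_hat_summands (N : nat) (u : nat -> C) (beta tau : C) :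
  mu_hat N u beta tau
  = cexp (PI * Ci * (beta - 1) * csum (S N) u) * sumZN N (mu_summand u beta tau N).
Proof. reflexivity. Qed.

Lemma mu_head_poch (u : nat -> C) (beta tau M : C) :
  mu_head u beta tau M
  = cexp (PI * Ci * u O) * poch tau (u O + (beta + M) * tau) / poch tau (u O + M * tau).
Proof.
  unfold mu_head, poch. change (cexp (2 * PI * Ci * u O)) with (e2pi (u O)).
  rewrite !qpow_e2pi, <- !e2pi_add. reflexivity.
Qed.

Lemma mu_head_reflect (tau a : C) (u : nat -> C) (m : Z) : (0 < Im tau)%R ->
  ~ in_lattice (u O) tau -> ~ in_lattice (u O + a * tau) tau ->
  mu_head (fun j => - a * tau - u j) (a + 1) tau (IZR m) * e2pi ((a + 1) * tau * IZR m)
  = - vartheta (u O) tau / vartheta (u O + a * tau) tau * mu_head u (a + 1) tau (IZR (- m)).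
Proof.
  intros Htau Hs Hsa. rewrite !mu_head_poch, !vartheta_core, opp_IZR, RtoC_opp.
  pose proof (theta_core_twist tau (u O) a m) as Htwist.
  set (s := u O) in *. set (M := RtoC (IZR m)) in *.
  set (x := s - M * tau) in *. set (y := s + (a + 1 - M) * tau) in *.
  replace (- a * tau - s + (a + 1 + M) * tau) with (tau - x) by (unfold x; ring).
  replace (- a * tau - s + M * tau) with (tau - y) by (unfold y; ring).
  replace (s + (a + 1 + - M) * tau) with y by (unfold y; ring).
  replace (s + - M * tau) with x by (unfold x; ring).
  set (X := cexp (- PI * Ci * (s + a * tau))). set (Y := cexp (PI * Ci * s)).
  set (E := e2pi ((a + 1) * tau * M)).
  replace (cexp (PI * Ci * (- a * tau - s))) with X by (unfold X; f_equal; ring).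
  replace (cexp (- PI * Ci * s)) with (/ Y) by (unfold Y; rewrite <- cexp_opp; f_equal; ring).
  replace (e2pi (- (s + a * tau) + (a + 1) * tau * M)) with (X * X * E) in Htwist
    by (unfold X, E, e2pi; rewrite <- !cexp_add; f_equal; ring).
  assert (Hx : poch tau x <> 0).
  { replace x with (s + IZR (- m) * tau) by (unfold x, M; rewrite opp_IZR, RtoC_opp; ring).
    apply poch_neq0, not_in_lattice_add, Hs. exact Htau. }
  assert (Hty : poch tau (tau - y) <> 0).
  { replace (tau - y) with (- (s + a * tau) + IZR m * tau) by (unfold y, M; ring).
    apply poch_neq0, not_in_lattice_add, not_in_lattice_opp, Hsa. exact Htau. }
  pose proof (theta_core_neq0 tau (s + a * tau) Htau Hsa) as Hcsa.
  pose proof (theta_const_neq0 tau Htau) as Hk.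
  assert (HX : X <> 0) by apply cexp_neq0.
  assert (HY : Y <> 0) by apply cexp_neq0.
  assert (HE : E <> 0) by apply cexp_neq0.
  clearbody s M x y X Y E.
  assert (Htx : poch tau (tau - x) = - theta_core tau s * theta_core tau y
                                     / (X * X * E * poch tau x * theta_core tau (s + a * tau))).
  { rewrite <- Htwist. change (theta_core tau x) with (poch tau x * poch tau (tau - x)).
    field. repeat split; assumption. }
  rewrite Htx. change (theta_core tau y) with (poch tau y * poch tau (tau - y)).
  field. repeat split; assumption.
Qed.

Lemma mu_factor_reflect (tau a : C) (u : nat -> C) (k : Z) (j : nat) : (0 < Im tau)%R ->
  ~ in_lattice (u (S j)) tau -> ~ in_lattice (u (S j) + a * tau) tau ->
  mu_factor (fun j => - a * tau - u j) tau k j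
  = e2pi ((a + 1) * tau * IZR k)
    * (- vartheta (u (S j)) tau / vartheta (u (S j) + a * tau) tau)
    * mu_factor u tau (- k) j.
Proof.
  intros Htau Hv Hva. unfold mu_factor. cbv beta.
  replace (sgnZ (- k)) with (sgnZ k) by (unfold sgnZ; rewrite Z.even_opp; reflexivity).
  replace (- a * tau - u (S j)) with (- (u (S j) + a * tau)) by ring.
  rewrite vartheta_opp.
  assert (Hexp : cexp (- (2 * PI * Ci * IZR k * - (u (S j) + a * tau)))
                 * cexp (PI * Ci * tau * IZR (k * (k + 1)))
                 = e2pi ((a + 1) * tau * IZR k)
                   * (cexp (- (2 * PI * Ci * IZR (- k) * u (S j)))
                      * cexp (PI * Ci * tau * IZR (- k * (- k + 1))))).
  { unfold e2pi. rewrite <- !cexp_add. f_equal.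
    rewrite !mult_IZR, !plus_IZR, !opp_IZR, ?RtoC_mult, ?RtoC_plus, ?RtoC_opp. ring. }
  transitivity (sgnZ k * (cexp (- (2 * PI * Ci * IZR k * - (u (S j) + a * tau)))
                 * cexp (PI * Ci * tau * IZR (k * (k + 1)))) / - vartheta (u (S j) + a * tau) tau).
  { unfold Cdiv. ring. }
  rewrite Hexp. pose proof (vartheta_neq0 _ _ Htau Hv). pose proof (vartheta_neq0 _ _ Htau Hva).
  field. split; assumption.
Qed.

Lemma zabs_sum_opp (n : list Z) : zabs_sum (map Z.opp n) = (- zabs_sum n)%Z.
Proof. induction n as [|k n IH]; simpl; [reflexivity|]. rewrite IH. lia. Qed.

Lemma nth_map_opp (j : nat) (n : list Z) : nth j (map Z.opp n) 0%Z = (- nth j n 0)%Z.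
Proof. apply (map_nth Z.opp n 0%Z j). Qed.

Lemma cprod_e2pi_nth (c : C) (N : nat) (n : list Z) : length n = N ->
  cprod N (fun j => e2pi (c * IZR (nth j n 0%Z))) = e2pi (c * IZR (zabs_sum n)).
Proof.
  revert N. induction n as [|k n IH]; intros [|N] HN; simpl in HN; try discriminate.
  - simpl. unfold e2pi. rewrite <- cexp_0. f_equal. ring.
  - rewrite cprod_succ_l. cbn [nth zabs_sum fold_right].
    rewrite (IH N) by lia. rewrite <- e2pi_add. f_equal.
    unfold zabs_sum. rewrite plus_IZR, RtoC_plus. ring.
Qed.

Lemma csum_const_sub (n : nat) (c : C) (f : nat -> C) :
  csum n (fun j => c - f j) = INR n * c - csum n f.
Proof.
  induction n as [|n IH]; [simpl; ring|].
  cbn [csum]. rewrite IH, S_INR, RtoC_plus. ring.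
Qed.

Lemma zsum_ext (n : nat) (a : Z) (g h : Z -> C) :
  (forall k, g k = h k) -> zsum a n g = zsum a n h.
Proof. intros H. induction n as [|n IH]; simpl; [reflexivity|]. rewrite IH, H. reflexivity. Qed.

Lemma zsum_scal (n : nat) (a : Z) (c : C) (g : Z -> C) :
  zsum a n (fun k => c * g k) = c * zsum a n g.
Proof. induction n as [|n IH]; simpl; [ring|]. rewrite IH. ring. Qed.

Lemma zsum_succ_l (n : nat) (a : Z) (g : Z -> C) :
  zsum a (S n) g = g a + zsum (a + 1)%Z n g.
Proof.
  induction n as [|n IH].
  - simpl. rewrite Z.add_0_r. ring.
  - change (zsum a (S (S n)) g) with (zsum a (S n) g + g (a + Z.of_nat (S n))%Z).
    rewrite IH. simpl.
    replace (a + Z.pos (Pos.of_succ_nat n))%Z with (a + 1 + Z.of_nat n)%Z by lia. ring.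
Qed.

Lemma zsum_reflect (n : nat) (a b : Z) (g : Z -> C) :
  zsum a n (fun k => g (b - k)%Z) = zsum (b - a - Z.of_nat n + 1)%Z n g.
Proof.
  revert a. induction n as [|n IH]; intros a; [reflexivity|].
  change (zsum a (S n) (fun k => g (b - k)%Z))
    with (zsum a n (fun k => g (b - k)%Z) + g (b - (a + Z.of_nat n))%Z).
  rewrite IH, zsum_succ_l.
  replace (b - a - Z.of_nat (S n) + 1)%Z with (b - (a + Z.of_nat n))%Z by lia.
  replace (b - (a + Z.of_nat n) + 1)%Z with (b - a - Z.of_nat n + 1)%Z by lia. ring.
Qed.

Lemma boxsum_reflect (N K : nat) (f g : list Z -> C) (c : C) :
  (forall n, length n = N -> f n = c * g (map Z.opp n)) ->
  boxsum N K f = c * boxsum N K g.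
Proof.
  revert f g. induction N as [|N IH]; intros f g H; simpl.
  - apply H. reflexivity.
  - rewrite (zsum_ext _ _ _ (fun k => c * boxsum N K (fun n => g ((0 - k)%Z :: n)))).
    + rewrite zsum_scal, (zsum_reflect _ _ _ (fun k => boxsum N K (fun n => g (k :: n)))).
      do 2 f_equal. lia.
    + intros k. apply IH. intros n Hn. rewrite H by (simpl; auto). reflexivity.
Qed.

Lemma sumZN_reflect (N : nat) (f g : list Z -> C) (c : C) :
  (forall n, length n = N -> f n = c * g (map Z.opp n)) ->
  sumZN N f = c * sumZN N g.
Proof.
  intros H. unfold sumZN. rewrite <- climit_scal. apply climit_ext. intros K.
  apply boxsum_reflect, H.
Qed.

Lemma mu_summand_reflect (tau a : C) (u : nat -> C) (N : nat) (n : list Z) : (0 < Im tau)%R ->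
  (forall j, (j <= N)%nat -> ~ in_lattice (u j) tau /\ ~ in_lattice (u j + a * tau) tau) ->
  length n = N ->
  mu_summand (fun j => - a * tau - u j) (a + 1) tau N n
  = cprod (S N) (fun j => - vartheta (u j) tau / vartheta (u j + a * tau) tau)
    * mu_summand u (a + 1) tau N (map Z.opp n).
Proof.
  intros Htau Hu Hn. unfold mu_summand. rewrite zabs_sum_opp.
  rewrite (cprod_ext N _ (fun j => e2pi ((a + 1) * tau * IZR (nth j n 0%Z))
      * (- vartheta (u (S j)) tau / vartheta (u (S j) + a * tau) tau)
      * mu_factor u tau (nth j (map Z.opp n) 0%Z) j)).
  2:{ intros j Hj. rewrite nth_map_opp. destruct (Hu (S j)) as [Hv Hva]; [lia|].
      apply mu_factor_reflect; assumption. }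
  rewrite !cprod_mult, cprod_e2pi_nth, cprod_succ_l by exact Hn.
  destruct (Hu O) as [Hs Hsa]; [lia|].
  set (V := cprod N (fun j => - vartheta (u (S j)) tau / vartheta (u (S j) + a * tau) tau)).
  set (F := cprod N (fun j => mu_factor u tau (nth j (map Z.opp n) 0%Z) j)).
  transitivity (mu_head (fun j => - a * tau - u j) (a + 1) tau (IZR (zabs_sum n))
                * e2pi ((a + 1) * tau * IZR (zabs_sum n)) * V * F); [ring|].
  rewrite mu_head_reflect by assumption. ring.
Qed.

Theorem theorem1p1 (tau : C) (Htau : (0 < Im tau)%R) (N : nat) (HN : (1 <= N)%nat)
  (alpha : C) (u : nat -> C)
  (Hu : forall j : nat, (j <= N)%nat ->
        ~ in_lattice (u j) tau /\ ~ in_lattice (u j + alpha * tau) tau) :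
  let U := csum (S N) u in
  cexp (2 * PI * Ci * alpha * U)
  * cexp (PI * Ci * alpha ^ 2 * RtoC (INR (S N)) * tau)
  * mu_hat N (fun j => - alpha * tau - u j) (alpha + 1) tau
  = (-1) ^ (S N)
    * cprod (S N) (fun j => vartheta (u j) tau)
    / cprod (S N) (fun j => vartheta (u j + alpha * tau) tau)
    * mu_hat N u (alpha + 1) tau.
Proof.
  intros U. rewrite !mu_hat_summands, csum_const_sub. fold U.
  rewrite (sumZN_reflect N _ (mu_summand u (alpha + 1) tau N) _
             (fun n => mu_summand_reflect tau alpha u N n Htau Hu)).
  rewrite cprod_opp_div.
  2:{ intros j Hj. apply vartheta_neq0; [exact Htau | apply Hu; lia]. }
  replace (alpha + 1 - 1) with alpha by ring.
  assert (Hexp : cexp (2 * PI * Ci * alpha * U) * cexp (PI * Ci * alpha ^ 2 * INR (S N) * tau)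
                 * cexp (PI * Ci * alpha * (INR (S N) * (- alpha * tau) - U))
                 = cexp (PI * Ci * alpha * U)).
  { rewrite <- !cexp_add. f_equal. ring. }
  rewrite <- Hexp. ring.
Qed.
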